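(* Let $\epsilon, b, c \in \mathbb{C}$ with $\epsilon\neq 0$ and $1-\tfrac13\epsilon^2 b\neq 0$. Consider the map $\Phi:(x,y)\mapsto(\widetilde x,\widetilde y)$ of $\mathbb{C}^2$ defined implicitly by the system (linear in $(\widetilde x,\widetilde y)$, hence defining a birational map) \[ \frac{\widetilde x - x}{\epsilon}=x\widetilde y+\widetilde x y, \qquad \frac{\widetilde y-y}{\epsilon}= b+c(1-\epsilon^2b)(x+\widetilde x)+\big(1-\epsilon^2c^2(2-\epsilon^2b)\big)x \widetilde x -(2-\epsilon^2b)\,y \widetilde y . \] Set \[ p=\frac{(1-\epsilon^2 b)(1-\frac{1}{2}\epsilon^2 b)}{1-\frac{1}{3}\epsilon^2b},\qquad a_1=1-\epsilon^2b-\tfrac{4}{3}\epsilon^2c^2p,\qquad c_1=cp, \] \[ m_1=1+\epsilon y+\epsilon(1-\epsilon c)x,\quad m_2=1+\epsilon y-\epsilon(1+\epsilon c)x,\quad m_3=1-\epsilon y+\epsilon(1-\epsilon c)x,\quad m_4=1-\epsilon y-\epsilon(1+\epsilon c)x . \] Then $\Phi$ is integrable in the sense that the rational function \[ H(x,y;\epsilon)=\frac{x^2\big((1-\frac{1}{2}\epsilon^2b)y^2-\frac{1}{4}a_1x^2-\frac{2}{3}c_1x-\frac{1}{2}b\big)}{m_1(x,y)\,m_2(x,y)\,m_3(x,y)\,m_4(x,y)} \] satisfies $H(\widetilde x,\widetilde y;\epsilon)=H(x,y;\epsilon)$ for all $(x,y)$ at which $\Phi$ and both sides are defined.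
   Context: This map is a modification of the Kahan discretization of the planar system $\dot x=2xy$, $\dot y=b+2cx+x^2-2y^2$ (whose standard Kahan discretization is $(\widetilde x-x)/\epsilon=\widetilde x y+x\widetilde y$, $(\widetilde y-y)/\epsilon=b+c(x+\widetilde x)+x\widetilde x-2y\widetilde y$). An integral of motion of a map $\Phi$ is a (nonconstant) function $H$ with $H\circ\Phi=H$. *)

(* The complex numbers are modelled by an arbitrary
   numClosedFieldType (algebraically closed field of characteristic 0 with
   the numeric structure; C is such a field, algC is another instance). *)
From HB Require Import structures.
From mathcomp Require Import all_boot all_order all_algebra.
Set Implicit Arguments. Unset Strict Implicit. Unset Printing Implicit Defensive.
Import Order.TTheory GRing.Theory Num.Theory.
Local Open Scope ring_scope.

Section Defs.
Variable C : numClosedFieldType.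

Definition kahan_eqs (eps b c x y xt yt : C) : Prop :=
  (xt - x) / eps = x * yt + xt * y /\
  (yt - y) / eps =
    b + c * (1 - eps ^+ 2 * b) * (x + xt)
      + (1 - eps ^+ 2 * c ^+ 2 * (2 - eps ^+ 2 * b)) * x * xt
      - (2 - eps ^+ 2 * b) * y * yt.

(* Phi is defined at (x,y) with value (xt,yt): (xt,yt) is the unique
   solution of the (linear in (xt,yt)) system. *)
Definition kahan_map_at (eps b c x y xt yt : C) : Prop :=
  kahan_eqs eps b c x y xt yt /\
  (forall xt' yt', kahan_eqs eps b c x y xt' yt' -> xt' = xt /\ yt' = yt).

Definition p_coef (eps b : C) : C :=
  (1 - eps ^+ 2 * b) * (1 - 2^-1 * eps ^+ 2 * b) / (1 - 3^-1 * eps ^+ 2 * b).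
Definition a1_coef (eps b c : C) : C :=
  1 - eps ^+ 2 * b - 4 / 3 * eps ^+ 2 * c ^+ 2 * p_coef eps b.
Definition c1_coef (eps b c : C) : C := c * p_coef eps b.

Definition m1 (eps c x y : C) : C := 1 + eps * y + eps * (1 - eps * c) * x.
Definition m2 (eps c x y : C) : C := 1 + eps * y - eps * (1 + eps * c) * x.
Definition m3 (eps c x y : C) : C := 1 - eps * y + eps * (1 - eps * c) * x.
Definition m4 (eps c x y : C) : C := 1 - eps * y - eps * (1 + eps * c) * x.

Definition H_den (eps c x y : C) : C :=
  m1 eps c x y * m2 eps c x y * m3 eps c x y * m4 eps c x y.

Definition H_num (eps b c x y : C) : C :=
  x ^+ 2 * ((1 - 2^-1 * eps ^+ 2 * b) * y ^+ 2 - 4^-1 * a1_coef eps b c * x ^+ 2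
            - 2 / 3 * c1_coef eps b c * x - 2^-1 * b).

Definition H (eps b c x y : C) : C := H_num eps b c x y / H_den eps c x y.
End Defs.

(* The system is linear in (xt, yt), so Phi is given by Cramer's rule with determinant
   Delta(x, y); uniqueness of the solution forces Delta <> 0, and xt = x l0 / Delta.
   Phi permutes the four lines m_i up to linear factors:
     m1 o Phi = m3 l0 / Delta,  m2 o Phi = m4 l0 / Delta,
     m3 o Phi = m2 l3 / Delta,  m4 o Phi = m1 l4 / Delta,
   and the quadratic factor Q of the numerator x^2 Q of H satisfies
   Q o Phi = Q l3 l4 / Delta^2.  Hence both numerator and denominator of H o Phi
   acquire the same factor l0^2 l3 l4 / Delta^4, which cancels. *)
From HB Require Import structures.
From mathcomp Require Import all_boot all_order all_algebra.
From mathcomp Require Import ring.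
Set Implicit Arguments. Unset Strict Implicit. Unset Printing Implicit Defensive.
Import Order.TTheory GRing.Theory Num.Theory.
Local Open Scope ring_scope.

Lemma det2_eq0_kernel (F : fieldType) (a11 a12 a21 a22 : F) :
  a11 * a22 = a12 * a21 ->
  exists2 w : F * F, w != (0, 0) & a11 * w.1 + a12 * w.2 = 0 /\ a21 * w.1 + a22 * w.2 = 0.
Proof.
move=> det0.
have [row1_0 | row1_neq0] := eqVneq (a11, a12) (0, 0).
  case: row1_0 => -> ->.
  have [row2_0 | row2_neq0] := eqVneq (a22, - a21) (0, 0).
    case: row2_0 => -> /eqP; rewrite oppr_eq0 => /eqP ->.
    by exists (1, 0); [rewrite xpair_eqE oner_eq0 | split; ring].
  by exists (a22, - a21) => //=; split; ring.
exists (- a12, a11) => /=; last by split; [ring | ring: det0].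
by apply: contra row1_neq0; rewrite !xpair_eqE oppr_eq0 andbC.
Qed.

Lemma det2_neq0_of_unique (F : fieldType) (a11 a12 a21 a22 u v : F) :
  (forall u' v', a11 * u' + a12 * v' = a11 * u + a12 * v ->
                 a21 * u' + a22 * v' = a21 * u + a22 * v -> u' = u /\ v' = v) ->
  a11 * a22 - a12 * a21 != 0.
Proof.
move=> unique_sol; apply/negP; rewrite subr_eq0 => /eqP.
move=> /det2_eq0_kernel [[w1 w2] w_neq0 [/= k1 k2]].
have [u_eq v_eq] : u + w1 = u /\ v + w2 = v.
  by apply: unique_sol; rewrite !mulrDr addrACA ?k1 ?k2 addr0.
move: w_neq0; rewrite xpair_eqE -(addKr u w1) -(addKr v w2) u_eq v_eq.
by rewrite !addNr !eqxx.
Qed.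

Lemma cramer2 (F : fieldType) (a11 a12 a21 a22 r1 r2 u v : F) :
  a11 * u + a12 * v = r1 -> a21 * u + a22 * v = r2 ->
  a11 * a22 - a12 * a21 != 0 ->
  u = (r1 * a22 - a12 * r2) / (a11 * a22 - a12 * a21) /\
  v = (a11 * r2 - a21 * r1) / (a11 * a22 - a12 * a21).
Proof. by move=> <- <- det_neq0; split; apply: (mulIf det_neq0); rewrite divfK //; ring. Qed.

Lemma eq_of_sub_eq (R : zmodType) (a b a' b' : R) : a' - b' = a - b -> a' = b' -> a = b.
Proof. by move=> eq_sub /eqP; rewrite -subr_eq0 eq_sub subr_eq0 => /eqP. Qed.

Lemma divf_eq (F : fieldType) (e A B : F) : e != 0 -> A / e = B <-> A = e * B.
Proof. by move=> e_neq0; split=> [<- | ->]; field. Qed.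

Section KahanMap.
Variables (C : numClosedFieldType) (eps b c : C).

Local Notation q := (1 - eps ^+ 2 * b).
Local Notation s := (2 - eps ^+ 2 * b).
Local Notation r := (1 - eps ^+ 2 * c ^+ 2 * s).
Local Notation t := (3 - eps ^+ 2 * b).

Lemma kahan_eqs_linear (x y u v : C) : eps != 0 ->
  kahan_eqs eps b c x y u v <->
  (1 - eps * y) * u + - (eps * x) * v = x /\
  - (eps * (c * q + r * x)) * u + (1 + eps * s * y) * v = y + eps * (b + c * q * x).
Proof.
move=> eps_neq0; rewrite /kahan_eqs !divf_eq //.
by split=> [[E1 E2] | [L1 L2]]; split;
  [move: E1 | move: E2 | move: L1 | move: L2]; apply: eq_of_sub_eq; ring.
Qed.

Definition kahan_det (x y : C) : C :=
  (1 - eps * y) * (1 + eps * s * y) - eps ^+ 2 * x * (c * q + r * x).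
Definition kahan_l0 (x y : C) : C := 1 + eps ^+ 2 * b + eps * t * y + eps ^+ 2 * c * q * x.
Definition kahan_l3 (x y : C) : C := q * (1 - eps * y) + eps * (2 - eps * c * t) * x.
Definition kahan_l4 (x y : C) : C := q * (1 - eps * y) - eps * (2 + eps * c * t) * x.
Definition kahan_x (x y : C) : C := x * kahan_l0 x y / kahan_det x y.
Definition kahan_y (x y : C) : C :=
  ((1 - eps * y) * (y + eps * (b + c * q * x)) + eps * x * (c * q + r * x)) / kahan_det x y.

Lemma kahan_map_atE (x y xt yt : C) : eps != 0 -> kahan_map_at eps b c x y xt yt ->
  [/\ kahan_det x y != 0, xt = kahan_x x y & yt = kahan_y x y].
Proof.
move=> eps_neq0 [/(kahan_eqs_linear _ _ _ _ eps_neq0) [L1 L2] unique_sol].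
have det_eq : (1 - eps * y) * (1 + eps * s * y) - - (eps * x) * - (eps * (c * q + r * x))
    = kahan_det x y by rewrite /kahan_det; ring.
have det_neq0 : kahan_det x y != 0.
  rewrite -det_eq; apply: (det2_neq0_of_unique (u := xt) (v := yt)) => u v E1 E2.
  by apply: unique_sol; apply/kahan_eqs_linear => //; rewrite E1 E2.
have := cramer2 L1 L2; rewrite det_eq => /(_ det_neq0) [-> ->].
by split; rewrite // /kahan_x /kahan_y; congr (_ / _); rewrite /kahan_l0; ring.
Qed.

Lemma m1_kahan (x y : C) : kahan_det x y != 0 ->
  m1 eps c (kahan_x x y) (kahan_y x y) = m3 eps c x y * kahan_l0 x y / kahan_det x y.
Proof.
rewrite /m1 /m3 /kahan_x /kahan_y /kahan_l0 /kahan_det => det_neq0.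
(* [field] states its side condition with [eps ^+ 2 * c ^+ 2] regrouped as [(eps * c) ^+ 2]. *)
by field; rewrite exprMn.
Qed.

Lemma m2_kahan (x y : C) : kahan_det x y != 0 ->
  m2 eps c (kahan_x x y) (kahan_y x y) = m4 eps c x y * kahan_l0 x y / kahan_det x y.
Proof.
rewrite /m2 /m4 /kahan_x /kahan_y /kahan_l0 /kahan_det => det_neq0.
by field; rewrite exprMn.
Qed.

Lemma m3_kahan (x y : C) : kahan_det x y != 0 ->
  m3 eps c (kahan_x x y) (kahan_y x y) = m2 eps c x y * kahan_l3 x y / kahan_det x y.
Proof.
rewrite /m3 /m2 /kahan_x /kahan_y /kahan_l0 /kahan_l3 /kahan_det => det_neq0.
by field; rewrite exprMn.
Qed.

Lemma m4_kahan (x y : C) : kahan_det x y != 0 ->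
  m4 eps c (kahan_x x y) (kahan_y x y) = m1 eps c x y * kahan_l4 x y / kahan_det x y.
Proof.
rewrite /m4 /m1 /kahan_x /kahan_y /kahan_l0 /kahan_l4 /kahan_det => det_neq0.
by field; rewrite exprMn.
Qed.

Definition H_quad (x y : C) : C :=
  (1 - 2^-1 * eps ^+ 2 * b) * y ^+ 2 - 4^-1 * a1_coef eps b c * x ^+ 2
  - 2 / 3 * c1_coef eps b c * x - 2^-1 * b.

Lemma H_quad_kahan (x y : C) : kahan_det x y != 0 -> 3 - eps ^+ 2 * b != 0 ->
  H_quad (kahan_x x y) (kahan_y x y)
  = H_quad x y * kahan_l3 x y * kahan_l4 x y / kahan_det x y ^+ 2.
Proof.
rewrite /H_quad /a1_coef /c1_coef /p_coef /kahan_x /kahan_y /kahan_l0 /kahan_l3 /kahan_l4.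
rewrite /kahan_det => det_neq0 t_neq0.
by field; rewrite exprMn det_neq0.
Qed.

Lemma H_kahan (x y : C) : kahan_det x y != 0 -> 3 - eps ^+ 2 * b != 0 ->
  H_den eps c x y != 0 -> H_den eps c (kahan_x x y) (kahan_y x y) != 0 ->
  H eps b c (kahan_x x y) (kahan_y x y) = H eps b c x y.
Proof.
move=> det_neq0 t_neq0.
have H_numE u v : H_num eps b c u v = u ^+ 2 * H_quad u v by [].
rewrite /H !H_numE /H_den m1_kahan // m2_kahan // m3_kahan // m4_kahan // H_quad_kahan //.
move=> den_neq0 den'_neq0.
have [m1_neq0 m2_neq0 m3_neq0 m4_neq0] :
    [/\ m1 eps c x y != 0, m2 eps c x y != 0, m3 eps c x y != 0 & m4 eps c x y != 0].
  by split; apply: contraNneq den_neq0 => ->; rewrite !(mulr0, mul0r).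
have [l0_neq0 l3_neq0 l4_neq0] :
    [/\ kahan_l0 x y != 0, kahan_l3 x y != 0 & kahan_l4 x y != 0].
  by split; apply: contraNneq den'_neq0 => ->; rewrite !(mulr0, mul0r).
rewrite /kahan_x; field.
by rewrite m1_neq0 m2_neq0 m3_neq0 m4_neq0 l0_neq0 l3_neq0 l4_neq0 det_neq0.
Qed.

End KahanMap.

Theorem theorem2 (C : numClosedFieldType) (eps b c x y xt yt : C) :
  eps != 0 ->
  1 - 3^-1 * eps ^+ 2 * b != 0 ->
  kahan_map_at eps b c x y xt yt ->
  H_den eps c x y != 0 ->
  H_den eps c xt yt != 0 ->
  H eps b c xt yt = H eps b c x y.
Proof.
move=> eps_neq0 p_den_neq0 /(kahan_map_atE eps_neq0) [det_neq0 -> ->].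
apply: H_kahan => //.
have -> : 3 - eps ^+ 2 * b = 3 * (1 - 3^-1 * eps ^+ 2 * b) by field.
by rewrite mulf_neq0 ?pnatr_eq0.
Qed.
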